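(* Let $p$ be an odd prime and $n,k$ positive integers. Then $$\psi'(P^*(p^n,2^k))=\frac{p+1}{p^{2n+1}+1}+\frac{(p+1)(p^n-1)}{p^{2n+1}+1}\cdot\frac{(p+3)2^{2k-1}+p}{2^{2k+1}+1}.$$
   Context: For a finite group $G$, $\psi(G)=\sum_{x\in G} o(x)$ and $\psi'(G)=\psi(G)/\psi(\mathcal{C}_{|G|})$, where $\mathcal{C}_n$ is the cyclic group of order $n$. For an odd prime $p$ and positive integers $n,k$, $P^*(p^n,2^k)=A\rtimes\langle x\rangle$, where $A$ is elementary abelian of order $p^n$, $\langle x\rangle$ is cyclic of order $2^k$, and $x$ acts on $A$ by inversion $a\mapsto a^{-1}$. *)

From HB Require Import structures.
From mathcomp Require Import all_boot all_order all_algebra all_fingroup all_solvable.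
Set Implicit Arguments. Unset Strict Implicit. Unset Printing Implicit Defensive.

Definition psi (gT : finGroupType) (G : {set gT}) : nat := \sum_(x in G) #[x]%g.

(* Write G = A ><| <[x]>. The elements a * x^i with i even form the direct
   product A * <[x^2]> of groups of coprime orders, contributing
   psi A * psi <[x^2]>; every a * x^i with i odd has order 2^k. With
   psi A = 1 + (p^n - 1) p, the value (q^(2m+1) + 1) / (q + 1) of psi on a
   cyclic group of order q^m, and multiplicativity of psi on cyclic groups of
   coprime orders, the ratio reduces to a rational identity. *)

From HB Require Import structures.
From mathcomp Require Import all_boot all_order all_algebra all_fingroup all_solvable.
From mathcomp Require Import zify ring.
Import GRing.Theory Num.Theory.

Set Implicit Arguments.
Unset Strict Implicit.
Unset Printing Implicit Defensive.

Section Psi.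

Variable gT : finGroupType.
Local Open Scope group_scope.
Implicit Types (H K : {group gT}) (F : gT -> nat).

Lemma psi_setID H (B : {set gT}) :
  B \subset H -> psi H = (\sum_(g in B) #[g] + \sum_(g in H :\: B) #[g])%N.
Proof. by move=> sBH; rewrite /psi (big_setID B) (setIidPr sBH). Qed.

Lemma sum_mulg_TI H K F : H :&: K = 1 ->
  (\sum_(g in (H * K)%g) F g = \sum_(h in H) \sum_(k in K) F (h * k)%g)%N.
Proof.
move=> tiHK; have -> : H * K = (fun u => u.1 * u.2) @: setX H K.
  apply/setP=> g; apply/mulsgP/imsetP=> [[h k Hh Kk ->]|[[h k]]].
    by exists (h, k); rewrite ?inE ?Hh.
  by rewrite inE => /andP[/= Hh Kk] ->; exists h k.
rewrite big_imset /=; last first.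
  move=> [h1 k1] [h2 k2] /setXP[/= Hh1 Kk1] /setXP[/= Hh2 Kk2] /= E.
  have E2 : h2^-1 * h1 = k2 * k1^-1 by rewrite -(mulgK k1 h1) E mulgA mulKg.
  have : h2^-1 * h1 \in H :&: K by rewrite inE groupM ?groupV //= E2 groupM ?groupV.
  rewrite tiHK inE -eq_mulVg1 => /eqP eh; subst h2.
  by move/mulgI: E => ->.
rewrite (pair_big_dep (mem H) (fun _ => mem K)) /=.
by apply: eq_bigl => -[h k]; rewrite inE.
Qed.

Lemma sum_order_mul_coprime H K :
  coprime #|H| #|K| -> K \subset 'C(H) ->
  (\sum_(h in H) \sum_(k in K) #[h * k]%g = psi H * psi K)%N.
Proof.
move=> coHK cHK; rewrite /psi big_distrl; apply: eq_bigr => h Hh.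
rewrite big_distrr; apply: eq_bigr => k Kk; apply: orderM.
  exact: commute_sym (centP (subsetP cHK k Kk) h Hh).
exact: coprime_dvdl (order_dvdG Hh) (coprime_dvdr (order_dvdG Kk) coHK).
Qed.

Lemma psi_mulg_coprime H K :
  coprime #|H| #|K| -> K \subset 'C(H) -> psi (H * K) = (psi H * psi K)%N.
Proof.
move=> coHK cHK.
by rewrite /psi sum_mulg_TI ?coprime_TIg // -/psi sum_order_mul_coprime.
Qed.

Lemma psi_abelem p H : p.-abelem H -> psi H = (1 + (#|H| - 1) * p)%N.
Proof.
move=> abH; rewrite (psi_setID (sub1G H)) big_set1 order1.
rewrite (eq_bigr (fun _ => p)); last first.
  by move=> a; rewrite !inE => /andP[a1 Ha]; apply: abelem_order_p abH Ha a1.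
by rewrite sum_nat_const cardsD (setIidPr (sub1G H)) cards1.
Qed.

Lemma psi_cyclic_pgroup q m H : prime q -> cyclic H -> #|H| = (q ^ m)%N ->
  (psi H * (q + 1) = q ^ (2 * m + 1) + 1)%N.
Proof.
move=> q_pr; elim: m H => [|m IHm] H cycH oH.
  have -> : H = 1%G by apply/val_inj/eqP; rewrite /= trivg_card1 oH.
  by rewrite /psi big_set1 order1 mul1n addnC.
case/cyclicP: cycH => y defH; have oy : #[y] = (q ^ m.+1)%N by rewrite orderE -defH.
pose Z := <[y ^+ q]>%G.
have oZ : #|Z| = (q ^ m)%N.
  by rewrite -orderE orderXdiv oy expnS ?dvdn_mulr // mulKn // prime_gt0.
have sZH : Z \subset H by rewrite defH cycle_subG mem_cycle.
have oHZ : {in H :\: Z, forall g, #[g] = (q ^ m.+1)%N}.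
  move=> g; rewrite inE defH => /andP[Zg' /cycleP[i def_g]]; subst g.
  have q'i : ~~ (q %| i).
    by apply: contra Zg' => /dvdnP[j ->]; rewrite mulnC expgM mem_cycle.
  have /eqP co_i : coprime (q ^ m.+1) i by rewrite coprimeXl // prime_coprime.
  by rewrite orderXgcd oy co_i divn1.
have := IHm Z (cycle_cyclic _) oZ.
rewrite (psi_setID sZH) -/(psi Z) (eq_bigr _ oHZ) sum_nat_const cardsD.
rewrite (setIidPr sZH) oH oZ.
rewrite (_ : 2 * m.+1 + 1 = (2 * m + 1).+2)%N; last by lia.
rewrite !expnS (_ : 2 * m + 1 = m + m + 1)%N ?expnD ?expn1; last by lia.
set a := (q ^ m)%N; rewrite mulnDl => ->.
have -> : (q * a - a = (q - 1) * a)%N by rewrite mulnBl mul1n.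
have [r ->] : exists r, q = r.+1 by exists q.-1; rewrite prednK ?prime_gt0.
by rewrite subn1 /=; ring.
Qed.

Lemma psi_cyclic_coprime H m1 m2 :
  cyclic H -> #|H| = (m1 * m2)%N -> coprime m1 m2 ->
  exists H1 H2 : {group gT},
    [/\ cyclic H1, cyclic H2, #|H1| = m1, #|H2| = m2 & psi H = (psi H1 * psi H2)%N].
Proof.
case/cyclicP=> c defH oH co12.
have oc : #[c] = (m1 * m2)%N by rewrite orderE -defH.
have [m1_gt0 m2_gt0] : (0 < m1)%N /\ (0 < m2)%N.
  by apply/andP; rewrite -muln_gt0 -oH cardG_gt0.
pose H1 := <[c ^+ m2]>%G; pose H2 := <[c ^+ m1]>%G.
have oH1 : #|H1| = m1 by rewrite -orderE orderXdiv oc ?dvdn_mull // mulnK.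
have oH2 : #|H2| = m2 by rewrite -orderE orderXdiv oc ?dvdn_mulr // mulKn.
have co12' : coprime #|H1| #|H2| by rewrite oH1 oH2.
have cH12 : H2 \subset 'C(H1) by apply: cents_cycle; apply: commuteX2.
have defH12 : H :=: H1 * H2.
  apply/eqP; rewrite eq_sym eqEcard mul_subG ?defH ?cycle_subG ?mem_cycle //=.
  by rewrite TI_cardMg ?coprime_TIg // oH1 oH2 -defH oH.
exists H1, H2; split; rewrite ?cycle_cyclic //.
by rewrite defH12 psi_mulg_coprime.
Qed.

Lemma order_dvdn_mulg H a h :
  a \in H -> h \in 'N(H) -> H :&: <[h]> = 1 -> #[h] %| #[a * h].
Proof.
move=> Ha nHh tiHh; have nHa := subsetP (normG H) a Ha.
have : coset H ((a * h) ^+ #[a * h]) = 1 by rewrite expg_order morph1.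
rewrite morphX ?groupM // morphM //= (coset_id Ha) mul1g -morphX //.
move/(coset_idr (groupX _ nHh)) => Hhm.
have : h ^+ #[a * h] \in H :&: <[h]> by rewrite inE Hhm mem_cycle.
by rewrite tiHh inE order_dvdn.
Qed.

End Psi.

Section InvertingSemidirect.

Variables (gT : finGroupType) (G A : {group gT}) (x : gT) (k : nat).
Local Open Scope group_scope.
Hypotheses (k_gt0 : (0 < k)%N) (ox : #[x] = (2 ^ k)%N) (oddA : odd #|A|).
Hypotheses (defG : A ><| <[x]> = G) (invA : {in A, forall a, a ^ x = a^-1}).

Let D := <[x ^+ 2]>%G.

Lemma order_expg2 : #[x ^+ 2] = (2 ^ k.-1)%N.
Proof.
rewrite orderXdiv ox -(prednK k_gt0) expnS ?dvdn_mulr //.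
by rewrite mulKn.
Qed.

Lemma conjg_expg_inv i : {in A, forall a, a ^ (x ^+ i) = if odd i then a^-1 else a}.
Proof.
elim: i => [|i IHi] a Aa; first by rewrite conjg1.
rewrite expgSr conjgM IHi //=; case: (odd i) => /=; last exact: invA.
by rewrite conjVg invA // invgK.
Qed.

(* (a x^i)^2 = x^(2i) bounds the order from above; the image of a x^i in
   G / A, which is that of x^i, bounds it from below. *)
Lemma order_mulg_expg_odd a i : a \in A -> odd i -> #[a * x ^+ i] = (2 ^ k)%N.
Proof.
move=> Aa odd_i; have [_ _ nAX tiAX] := sdprodP defG.
set h := x ^+ i.
have oh : #[h] = (2 ^ k)%N.
  have /eqP co_i : coprime (2 ^ k) i by rewrite coprimeXl // coprime2n.
  by rewrite orderXgcd ox co_i divn1.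
have ah2 : (a * h) ^+ 2 = h ^+ 2.
  have ha : h * a = a^-1 * h by rewrite [RHS]conjgC /h conjg_expg_inv ?groupV // odd_i invgK.
  by rewrite !expgS !expg0 !mulg1 -mulgA (mulgA h) ha !mulgA mulgV mul1g.
apply/eqP; rewrite eqn_dvd; apply/andP; split.
  rewrite order_dvdn -(prednK k_gt0) expnS expgM ah2 -expgM -expnS prednK //.
  by rewrite -oh expg_order.
rewrite -oh (order_dvdn_mulg Aa) ?(subsetP nAX) ?mem_cycle //.
by apply/trivgP; rewrite -tiAX setIS // cycle_subG mem_cycle.
Qed.

Lemma psi_sdprod_inv :
  psi G = (psi A * psi D + #|A| * 2 ^ k.-1 * 2 ^ k)%N.
Proof.
have [_ mulAX _ tiAX] := sdprodP defG.
have oD : #|D| = (2 ^ k.-1)%N by rewrite -orderE order_expg2.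
have sDX : D \subset <[x]> by rewrite cycle_subG mem_cycle.
have cDA : D \subset 'C(A).
  rewrite cycle_subG; apply/centP=> a Aa; apply/commute_sym/commgP/conjg_fixP.
  exact: conjg_expg_inv.
have coAD : coprime #|A| #|D| by rewrite oD coprimeXr // coprime_sym coprime2n.
have oXD : {in A & <[x]> :\: D, forall a h, #[a * h] = (2 ^ k)%N}.
  move=> a h Aa; rewrite inE => /andP[Dh' /cycleP[i def_h]]; subst h.
  apply: order_mulg_expg_odd => //; apply: contraR Dh'.
  by rewrite -dvdn2 => /dvdnP[j ->]; rewrite mulnC expgM mem_cycle.
have cardXD : #|<[x]> :\: D| = (2 ^ k.-1)%N.
  rewrite cardsD (setIidPr sDX) -orderE ox oD -(prednK k_gt0) expnS /=.
  by rewrite mul2n -addnn addnK.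
rewrite /psi -mulAX sum_mulg_TI //.
rewrite (eq_bigr (fun a => \sum_(h in D) #[a * h] + 2 ^ k.-1 * 2 ^ k)%N); last first.
  move=> a Aa; rewrite (big_setID D) /= (setIidPr sDX).
  by rewrite (eq_bigr _ (fun h => oXD a h Aa)) sum_nat_const cardXD.
by rewrite big_split /= -/psi sum_order_mul_coprime // sum_nat_const mulnA.
Qed.

End InvertingSemidirect.

Section ClosedForm.
Local Open Scope ring_scope.

Lemma psi_ratio_closed_form (p n k sD sC1 sC2 : nat) :
  (0 < p)%N -> (0 < k)%N ->
  (sD * (2 + 1) = 2 ^ (2 * k.-1 + 1) + 1)%N ->
  (sC1 * (2 + 1) = 2 ^ (2 * k + 1) + 1)%N ->
  (sC2 * (p + 1) = p ^ (2 * n + 1) + 1)%N ->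
  ((1 + (p ^ n - 1) * p) * sD + p ^ n * 2 ^ k.-1 * 2 ^ k)%N%:R / (sC1 * sC2)%N%:R
  = (p%:R + 1) / (p%:R ^+ (2 * n + 1) + 1)
    + (p%:R + 1) * (p%:R ^+ n - 1) / (p%:R ^+ (2 * n + 1) + 1)
      * (((p%:R + 3) * 2%:R ^+ (2 * k - 1) + p%:R) / (2%:R ^+ (2 * k + 1) + 1)) :> rat.
Proof.
case: k => // k p_gt0 _ psiD psiC1; rewrite addn1 => psiC2.
have natr_quot m c d : (m * c.+1 = d)%N -> (m%:R : rat) = d%:R / c.+1%:R.
  by move=> <-; rewrite natrM mulfK // pnatr_eq0.
rewrite !(natrD, natrM) natrB ?expn_gt0 ?p_gt0 //.
rewrite (natr_quot _ _ _ psiD) (natr_quot _ _ _ psiC1) (natr_quot _ _ _ psiC2).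
rewrite (_ : 2 * k.+1 - 1 = (k + k).+1)%N; last by lia.
rewrite (_ : 2 * k.+1 + 1 = (k + k).+3)%N; last by lia.
rewrite (_ : 2 * k + 1 = (k + k).+1)%N; last by lia.
rewrite (_ : 2 * n + 1 = (n + n).+1)%N; last by lia.
rewrite !(natrD, natrX) !exprS !exprD /= -addn1 natrD.
have N_gt0 : 0 < p%:R ^+ n :> rat by rewrite exprn_gt0 ?ltr0n.
set N := p%:R ^+ n; set u := 2%:R ^+ k; field.
have u_gt0 : 0 < u by rewrite exprn_gt0.
by apply/and3P; split; rewrite lt0r_neq0 // addr_gt0 ?mulr_gt0 ?ltr0n.
Qed.

End ClosedForm.

Theorem proposition3p9 (p n k : nat) (gT : finGroupType) (G A : {group gT}) (x : gT)
    (cT : finGroupType) (C : {group cT}) :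
  prime p -> odd p -> (0 < n)%N -> (0 < k)%N ->
  (p.-abelem A)%g -> #|A| = (p ^ n)%N ->
  #[x]%g = (2 ^ k)%N ->
  (A ><| <[x]> = G)%g ->
  (forall a, a \in A -> (a ^ x = a^-1)%g) ->
  cyclic C -> #|C| = #|G| ->
  ((psi G)%:R / (psi C)%:R : rat)%R =
  ((p%:R + 1) / (p%:R ^+ (2 * n + 1) + 1)
   + (p%:R + 1) * (p%:R ^+ n - 1) / (p%:R ^+ (2 * n + 1) + 1)
     * (((p%:R + 3) * 2%:R ^+ (2 * k - 1) + p%:R) / (2%:R ^+ (2 * k + 1) + 1)))%R.
Proof.
move=> p_pr p_odd _ k_gt0 abA oA ox defG invA cycC oC.
have oG : #|G| = (2 ^ k * p ^ n)%N.
  by rewrite -(sdprod_card defG) oA -orderE ox mulnC.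
have co2p : coprime (2 ^ k) (p ^ n) by rewrite coprimeXl // coprimeXr // coprime2n.
have [C1 [C2 [cycC1 cycC2 oC1 oC2 ->]]] := psi_cyclic_coprime cycC (etrans oC oG) co2p.
have oddA : odd #|A| by rewrite oA oddX p_odd orbT.
rewrite (psi_sdprod_inv k_gt0 ox oddA defG invA) (psi_abelem abA) oA.
have pr2 : prime 2 by [].
apply: (psi_ratio_closed_form (prime_gt0 p_pr) k_gt0).
- by apply: psi_cyclic_pgroup pr2 (cycle_cyclic _) _; rewrite -orderE (order_expg2 k_gt0 ox).
- exact: psi_cyclic_pgroup pr2 cycC1 oC1.
- exact: psi_cyclic_pgroup p_pr cycC2 oC2.
Qed.
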